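(* Let $\mathcal{L}_1,\mathcal{L}_2\in\mathrm{Mat}_d(\mathbb{Z})$ be irreducible and coprime, and let $\Lambda=\mathbb{Z}^d\cap \mathcal{L}_1^{-1}\mathcal{L}_2 \mathbb{Z}^d\cap \mathcal{L}_2^{-1}\mathcal{L}_1 \mathbb{Z}^d$, $\Gamma_1=\Lambda\cap \mathcal{L}_2^{-1}\mathcal{L}_1\Lambda$, $G=\mathbb{Z}^d/\Gamma_1$, and $\phi_1,\phi_2:G\to\mathbb{Z}^d/\mathcal{L}_1\Lambda$ the homomorphisms $\phi_i(x+\Gamma_1)=\mathcal{L}_ix+\mathcal{L}_1\Lambda$. Let $X\subseteq G$ with $0\in X$. Then at least one of the following holds: (1) $X$ does not generate $G$; (2) $|\phi_1(X)+\phi_2(X)|>|X|$; (3) $\Lambda/\Gamma_1\subseteq X$.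
   Context: Irreducible: there are no non-trivial subspaces $U,V$ of $\mathbb{Q}^d$ of the same dimension with $\mathcal{L}_1U\subseteq V$ and $\mathcal{L}_2U\subseteq V$. Coprime: there are no $\mathcal{P},\mathcal{Q}\in \mathrm{GL}_d(\mathbb{Q})$ with $0<|\det(\mathcal{P})\det(\mathcal{Q})|<1$ such that $\mathcal{P}\mathcal{L}_1\mathcal{Q},\mathcal{P}\mathcal{L}_2\mathcal{Q}\in\mathrm{Mat}_d(\mathbb{Z})$. The maps $\phi_1,\phi_2$ are well defined and $\phi_1+\phi_2$ is an isomorphism. *)

From HB Require Import structures.
From mathcomp Require Import all_boot all_order all_algebra.
From mathcomp Require Import boolp classical_sets cardinality.
Set Implicit Arguments. Unset Strict Implicit. Unset Printing Implicit Defensive.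
Import Order.TTheory GRing.Theory Num.Theory.
Local Open Scope ring_scope.
Local Open Scope classical_set_scope.

Notation Zvec d := 'cV[int]_d.

Definition ratmx (m n : nat) (A : 'M[int]_(m, n)) : 'M[rat]_(m, n) :=
  map_mx (fun z : int => z%:~R) A.

(* Subspaces are row spaces of matrices
   (mxalgebra convention); a column vector u is mapped to L u, i.e. the row
   vector u^T to u^T *m L^T. *)
Definition irreducible_pair (d : nat) (L1 L2 : 'M[int]_d) : Prop :=
  ~ exists U V : 'M[rat]_d,
      [/\ \rank U = \rank V, (0 < \rank U)%N, (\rank U < d)%N,
          (U *m (ratmx L1)^T <= V)%MS & (U *m (ratmx L2)^T <= V)%MS].

Definition coprime_pair (d : nat) (L1 L2 : 'M[int]_d) : Prop :=
  ~ exists P Q : 'M[rat]_d,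
      [/\ P \in unitmx, Q \in unitmx,
          0 < `|\det P * \det Q| < 1,
          exists M1 : 'M[int]_d, P *m ratmx L1 *m Q = ratmx M1 &
          exists M2 : 'M[int]_d, P *m ratmx L2 *m Q = ratmx M2].

Definition Lambda (d : nat) (L1 L2 : 'M[int]_d) : set (Zvec d) :=
  [set x | (exists y, L1 *m x = L2 *m y) /\ (exists z, L2 *m x = L1 *m z)].

Definition Gamma1 (d : nat) (L1 L2 : 'M[int]_d) : set (Zvec d) :=
  [set x | Lambda L1 L2 x /\ exists w, Lambda L1 L2 w /\ L2 *m x = L1 *m w].

Definition L1Lambda (d : nat) (L1 L2 : 'M[int]_d) : set (Zvec d) :=
  [set L1 *m w | w in Lambda L1 L2].

Definition coset (d : nat) (H : set (Zvec d)) (x : Zvec d) : set (Zvec d) :=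
  [set x + h | h in H].

Definition cosets (d : nat) (H S : set (Zvec d)) : set (set (Zvec d)) :=
  [set coset H x | x in S].

(* A subset of G = Z^d / H is represented by its preimage in Z^d, i.e. an
   H-saturated subset of Z^d. *)
Definition saturated (d : nat) (H X : set (Zvec d)) : Prop :=
  forall x h, X x -> H h -> X (x + h).

(* X generates Z^d / H: every subgroup of Z^d / H (= subgroup of Z^d
   containing H) containing (the image of) X is everything. *)
Definition generates_quot (d : nat) (H X : set (Zvec d)) : Prop :=
  forall K : set (Zvec d),
    K 0 -> (forall a b, K a -> K b -> K (a - b)) ->
    H `<=` K -> X `<=` K -> K = setT.

Definition phi_sumset (d : nat) (L1 L2 : 'M[int]_d) (X : set (Zvec d))
  : set (set (Zvec d)) :=
  cosets (L1Lambda L1 L2) [set L1 *m x + L2 *m y | x in X & y in X].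

From HB Require Import structures.
From mathcomp Require Import all_boot all_order all_algebra.
From mathcomp Require Import boolp classical_sets cardinality.
From mathcomp Require Import ring zify finmap.
Import Order.TTheory GRing.Theory Num.Theory.
Set Implicit Arguments. Unset Strict Implicit. Unset Printing Implicit Defensive.
Local Open Scope ring_scope.
Local Open Scope classical_set_scope.
Local Open Scope card_scope.

(* psi = phi_1 + phi_2 is injective on G = Z^d / Gamma_1, so |phi_1(X) + phi_2(X)| <= |X|
   forces phi_1(X) + phi_2(X) = psi(X).  As X generates G, phi_1(G) lies in psi(G), and
   alpha = psi^-1 phi_1 is an endomorphism of G, given by an integer matrix A, with
   1 - alpha = psi^-1 phi_2; thus alpha x + (1 - alpha) y lies in X for x, y in X.
   Since G is finite, the sets (1 - alpha)^k X stabilise at some Y = (1 - alpha) Y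
   inside X.  Translations by alpha (1 - alpha)^n X preserve Y, hence so do those by
   the subgroup alpha (1 - alpha)^n G they generate, which therefore lies in Y.
   Finally every l in Lambda is alpha g with alpha^2 g = 0, and such g lie in
   (1 - alpha)^n G because (1 - alpha)(1 + alpha) = 1 - alpha^2. *)

Ltac entrywise_ring := apply/matrixP => ? ?; rewrite !mxE; ring.

Section FiniteSets.
Variable T : choiceType.

Lemma sub_of_card_fset_set_ge (A B : set T) : finite_set B -> A `<=` B ->
  (#|` fset_set B| <= #|` fset_set A|)%fset%N -> B `<=` A.
Proof.
move=> finB AB le_BA; have finA := sub_finite_set AB finB.
have /eqP eqAB : fset_set A == fset_set B.
  by rewrite eqEfcard le_BA andbT; have := AB; rewrite fset_set_sub.
move=> x Bx; have : x \in fset_set B by rewrite in_fset_set // in_setE.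
by rewrite -eqAB in_fset_set // in_setE.
Qed.

Lemma card_le_finite_sub (A B : set T) : finite_set A -> A `<=` B ->
  B #<= A -> B `<=` A.
Proof.
move=> finA AB BA; have finB := card_le_finite BA finA.
apply: sub_of_card_fset_set_ge => //; have /finite_setP[n An] := finA.
rewrite (card_fset_set An); apply: geq_card_fset_set.
by rewrite -(card_le_eqr An).
Qed.

Lemma decreasing_chain_stationary (C : nat -> set T) : finite_set (C 0%N) ->
  (forall k, C k.+1 `<=` C k) -> exists n, C n `<=` C n.+1.
Proof.
move=> fin0 decC; apply: contrapT => /forallNP stat.
have finC k : finite_set (C k).
  by elim: k => // k; apply: sub_finite_set (decC k).
pose s k := #|` fset_set (C k)|%fset.
have lt_s k : (s k.+1 < s k)%N.
  rewrite ltnNge; apply/negP => le_s; apply: (stat k).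
  exact: sub_of_card_fset_set_ge (finC k) (decC k) le_s.
have le_s k : (s k + k <= s 0)%N.
  elim: k => [|k IH]; first by rewrite addn0.
  by apply: leq_trans IH; rewrite addnS ltn_add2r.
by have := le_s (s 0).+1; rewrite addnS ltnNge leq_addl.
Qed.

End FiniteSets.

Definition is_subgroup d (H : set (Zvec d)) :=
  H 0 /\ forall a b, H a -> H b -> H (a - b).

Section Subgroups.
Variables (d : nat) (H : set (Zvec d)).
Hypothesis subH : is_subgroup H.

Lemma subgroup0 : H 0. Proof. exact: subH.1. Qed.

Lemma subgroupB a b : H a -> H b -> H (a - b). Proof. exact: subH.2. Qed.

Lemma subgroupN a : H a -> H (- a).
Proof. by move=> Ha; rewrite -sub0r; apply: subgroupB => //; apply: subgroup0. Qed.

Lemma subgroupD a b : H a -> H b -> H (a + b).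
Proof. by move=> Ha Hb; rewrite -[b]opprK; apply/subgroupB/subgroupN. Qed.

Lemma subgroupMn a n : H a -> H (a *+ n).
Proof.
move=> Ha; elim: n => [|n IH]; first by rewrite mulr0n; apply: subgroup0.
by rewrite mulrS; apply: subgroupD.
Qed.

Lemma subgroupZ (z : int) a : H a -> H (z *: a).
Proof.
move=> Ha; rewrite -[z]intz scaler_int.
by case: z => n; [apply: subgroupMn | apply/subgroupN/subgroupMn].
Qed.

Lemma subgroup_delta_setT : (forall j, H (delta_mx j 0)) -> H = setT.
Proof.
move=> Hdelta; apply/seteqP; split=> // v _; rewrite [v]matrix_sum_delta.
apply: (big_ind H) => [|a b|i _]; [exact: subgroup0 | exact: subgroupD |].
by rewrite big_ord1 ord1; apply: subgroupZ.
Qed.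

Lemma coset_eqP x y : coset H x = coset H y <-> H (x - y).
Proof.
split=> [eqxy|Hxy].
  have : coset H x x by exists 0; [exact: subgroup0 | rewrite addr0].
  by rewrite eqxy => -[h Hh <-]; rewrite addrC addKr.
apply/seteqP; split=> v [h Hh <-].
  by exists (x - y + h); [apply: subgroupD | rewrite addrA [y + _]addrC addrNK].
exists (- (x - y) + h); first by apply/subgroupD/Hh/subgroupN.
by rewrite addrA opprB [x + _]addrC addrNK.
Qed.

End Subgroups.

Section BoundedExponent.
Variables (d N : nat) (H : set (Zvec d)).
Hypotheses (subH : is_subgroup H) (N_gt0 : (0 < N)%N) (HN : forall v, H (v *+ N)).

Lemma cosets_finite (S : set (Zvec d)) : finite_set (cosets H S).
Proof.
have N_neq0 : N%:Z != 0 by rewrite lt0r_neq0 // ltz_nat.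
have ltN (z : int) : (absz (z %% N)%Z < N)%N.
  have N_gt0' : (0 < N%:Z)%R by rewrite ltz_nat.
  by have := modz_ge0 z N_neq0; have := ltz_pmod z N_gt0'; lia.
pose lift (r : 'cV['I_N]_d) : Zvec d := map_mx (fun i : 'I_N => (i : nat)%:Z) r.
apply: (sub_finite_set (B := (coset H \o lift) @` setT)); last first.
  exact/finite_image/finite_finset.
move=> _ [x _ <-]; exists (\matrix_(i, j) Ordinal (ltN (x i j))) => //=.
apply/coset_eqP => //.
suff -> : lift (\matrix_(i, j) Ordinal (ltN (x i j))) - x
          = (- \matrix_(i, j) (x i j %/ N)%Z) *+ N by [].
rewrite -scaler_nat; apply/matrixP => i j; rewrite !mxE /= natz.
by have := modz_ge0 (x i j) N_neq0; have := divz_eq (x i j) N; lia.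
Qed.

End BoundedExponent.

Lemma mulmxM (R : pzRingType) n m (P Q : 'M[R]_n) (v : 'M[R]_(n, m)) :
  (P * Q) *m v = P *m (Q *m v).
Proof. by rewrite mulmxA mulmxE. Qed.

Lemma subgroup_preimage d (K : set (Zvec d)) (P : 'M[int]_d) :
  is_subgroup K -> is_subgroup [set g | K (P *m g)].
Proof.
move=> subK; split=> [|a b Ka Kb] /=; first by rewrite mulmx0; apply: subgroup0.
by rewrite mulmxBr; apply: subgroupB.
Qed.

Definition mx_convex d (A : 'M[int]_d) (X : set (Zvec d)) :=
  forall x y, X x -> X y -> X (A *m x + (1 - A) *m y).

Section ConvexGeneratingSets.
Variables (d N : nat) (H : set (Zvec d)) (A : 'M[int]_d).
Hypotheses (subH : is_subgroup H) (N_gt0 : (0 < N)%N) (HN : forall v, H (v *+ N)).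
Hypothesis AH : forall h, H h -> H (A *m h).

Let B := 1 - A.

Definition mx_stable (P : 'M[int]_d) := forall h, H h -> H (P *m h).

Lemma mx_stable1 : mx_stable 1. Proof. by move=> h; rewrite mul1mx. Qed.

Lemma mx_stableB P Q : mx_stable P -> mx_stable Q -> mx_stable (P - Q).
Proof.
by move=> sP sQ h Hh; rewrite mulmxBl; apply: (subgroupB subH); [apply: sP | apply: sQ].
Qed.

Lemma mx_stableX P k : mx_stable P -> mx_stable (P ^+ k).
Proof.
move=> sP; elim: k => [|k IH] h Hh; first by rewrite expr0 mul1mx.
by rewrite exprS mulmxM; apply/sP/IH.
Qed.

Lemma mx_stable_1subA : mx_stable B.
Proof. exact: mx_stableB mx_stable1 AH. Qed.

Lemma commr_A_B : GRing.comm A B.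
Proof. exact/commrB/commr_refl/commr1. Qed.

Lemma sq_kernel_expr k g : H (A *m (A *m g)) -> H ((1 - A ^+ 2) ^+ k *m g - g).
Proof.
move=> HA2g; elim: k => [|k IH].
  by rewrite expr0 mul1mx subrr; apply: (subgroup0 subH).
set v := _ ^+ k *m g in IH.
have -> : (1 - A ^+ 2) ^+ k.+1 *m g - g = (v - g) - A *m (A *m (v - g)) - A *m (A *m g).
  by rewrite exprS mulmxM mulmxBl mul1mx expr2 mulmxM /v !mulmxBr; entrywise_ring.
by apply: (subgroupB subH) => //; apply: (subgroupB subH) => //; apply/AH/AH.
Qed.

Variable X : set (Zvec d).
Hypotheses (satX : saturated H X) (X0 : X 0) (convX : mx_convex A X).

Lemma mx_convexB y : X y -> X (B *m y).
Proof. by move=> Xy; have := convX X0 Xy; rewrite mulmx0 add0r. Qed.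

Lemma saturated_mod x y : X x -> H (y - x) -> X y.
Proof. by move=> Xx Hyx; rewrite -(subrK x y) addrC; apply: satX. Qed.

Definition stationary_at n :=
  forall u, X u -> exists2 u', X u' & H (B ^+ n *m u - B ^+ n.+1 *m u').

Lemma exists_stationary_at : exists n, stationary_at n.
Proof.
pose C k := cosets H [set B ^+ k *m u | u in X].
have decC k : C k.+1 `<=` C k.
  move=> _ [_ [u Xu <-] <-]; exists (B ^+ k *m (B *m u)); last first.
    by rewrite mulmxA mulmxE -exprSr.
  by exists (B *m u) => //; apply: mx_convexB.
have [n statn] := decreasing_chain_stationary (cosets_finite subH N_gt0 HN _) decC.
exists n => u Xu.
have : C n (coset H (B ^+ n *m u)) by exists (B ^+ n *m u) => //; exists u.
move/statn => [_ [u' Xu' <-]] /(coset_eqP subH) Hu'.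
by exists u' => //; rewrite -opprB; apply: (subgroupN subH).
Qed.

Definition imageB n := [set v | exists2 u, X u & H (v - B ^+ n *m u)].

Section Stationary.
Variable n : nat.
Hypothesis statn : stationary_at n.

Let Y := imageB n.

Lemma imageB_sub : Y `<=` X.
Proof.
move=> v [u Xu Hvu]; apply: saturated_mod Hvu.
by elim: n => [|k IH]; rewrite ?expr0 ?mul1mx // exprS mulmxM; apply: mx_convexB.
Qed.

Lemma imageB0 : Y 0.
Proof. by exists 0 => //; rewrite mulmx0 subrr; apply: (subgroup0 subH). Qed.

Lemma imageB_mod v w : Y v -> H (w - v) -> Y w.
Proof.
move=> [u Xu Hvu] Hwv; exists u => //.
by rewrite -(subrK v w) -addrA; apply: (subgroupD subH).
Qed.

Lemma imageB_lift y : Y y -> exists2 y', Y y' & H (y - B *m y').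
Proof.
move=> [u Xu Hyu]; have [u' Xu' Hu'] := statn Xu.
exists (B ^+ n *m u'); first by exists u' => //; rewrite subrr; apply: (subgroup0 subH).
rewrite mulmxA mulmxE -exprS -(subrK (B ^+ n *m u) y) -addrA.
exact: (subgroupD subH).
Qed.

Lemma imageB_shift k u y : X u -> Y y ->
  exists2 w, X w & H (A *m (B ^+ k *m u) + y - B ^+ k *m w).
Proof.
elim: k u y => [|k IH] u y Xu Yy; have [y' Yy' Hyy'] := imageB_lift Yy.
  exists (A *m u + B *m y'); first exact/convX/imageB_sub.
  by rewrite expr0 !mul1mx opprD addrACA subrr add0r.
have [w Xw Hw] := IH u y' Xu Yy'; exists w => //.
have -> : A *m (B ^+ k.+1 *m u) + y - B ^+ k.+1 *m w =
          B *m (A *m (B ^+ k *m u) + y' - B ^+ k *m w) + (y - B *m y').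
  have AB v : A *m (B *m v) = B *m (A *m v).
    by rewrite !mulmxA !mulmxE commr_A_B.
  rewrite exprS !mulmxM AB mulmxBr mulmxDr; entrywise_ring.
by apply: (subgroupD subH) => //; apply: mx_stable_1subA.
Qed.

Hypothesis genX : generates_quot H X.

Let T := [set t | forall y, Y y -> Y (y + t)].

Lemma translations_subgroup : is_subgroup T.
Proof.
have T_mod a b : T a -> H (b - a) -> T b.
  move=> Ta Hba y Yy; apply: imageB_mod (Ta y Yy) _.
  by rewrite opprD addrACA subrr add0r.
have TD a b : T a -> T b -> T (a + b) by move=> Ta Tb y Yy; rewrite addrA; apply/Tb/Ta.
have T0 : T 0 by move=> y; rewrite addr0.
have TMn a k : T a -> T (a *+ k).
  by move=> Ta; elim: k => [|k IH]; rewrite ?mulr0n ?mulrS //; apply: TD.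
(* [- b] is congruent to [b *+ N.-1] modulo H. *)
split=> // a b Ta Tb; apply: TD Ta (T_mod _ _ (TMn b N.-1 Tb) _).
by rewrite -opprD -mulrS prednK //; apply: (subgroupN subH).
Qed.

Lemma imageB_translate g : Y (A *m (B ^+ n *m g)).
Proof.
have T_H h : H h -> T h.
  by move=> Hh y Yy; apply: imageB_mod Yy _; rewrite addrC addKr.
suff /seteqP[_ /(_ g I)] : [set g | T ((A * B ^+ n) *m g)] = setT.
  by move=> /=; rewrite mulmxM => /(_ 0 imageB0); rewrite add0r.
have [K0 KB] := subgroup_preimage (A * B ^+ n) translations_subgroup.
apply: genX => //.
- by move=> h Hh; apply/T_H; rewrite mulmxM; apply/AH/mx_stableX/Hh/mx_stable_1subA.
move=> u Xu y Yy; have [w Xw Hw] := imageB_shift n Xu Yy.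
by exists w => //; rewrite mulmxM [y + _]addrC.
Qed.

End Stationary.

Lemma mx_convex_generating_mem g : generates_quot H X ->
  H (A *m (A *m g)) -> X (A *m g).
Proof.
move=> genX HA2g; have [n statn] := exists_stationary_at.
set g' := (1 + A) ^+ n *m g.
have BnA : B ^+ n *m g' = (1 - A ^+ 2) ^+ n *m g.
  rewrite /g' mulmxA mulmxE -exprMn_comm; last first.
    exact: commrD (commr1 _) (commr_sym commr_A_B).
  by rewrite /B mulrBl mul1r mulrDr mulr1 expr2 opprD addrA addrK.
apply: (@imageB_sub n); apply: imageB_mod (imageB_translate statn genX g') _.
rewrite BnA -mulmxBr -opprB mulmxN; apply/(subgroupN subH)/AH.
exact: sq_kernel_expr.
Qed.

End ConvexGeneratingSets.

Section Lattices.
Variables (d : nat) (L1 L2 : 'M[int]_d).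

Local Notation Lambda := (Lambda L1 L2).
Local Notation Gamma1 := (Gamma1 L1 L2).
Local Notation M := (L1Lambda L1 L2).

Lemma Lambda_subgroup : is_subgroup Lambda.
Proof.
split; first by split; exists 0; rewrite !mulmx0.
move=> a b [[ya ea] [za fa]] [[yb eb] [zb fb]]; split.
  by exists (ya - yb); rewrite !mulmxBr ea eb.
by exists (za - zb); rewrite !mulmxBr fa fb.
Qed.

Lemma Gamma1_subgroup : is_subgroup Gamma1.
Proof.
have [L0 LB] := Lambda_subgroup.
split; first by split => //; exists 0; split => //; rewrite !mulmx0.
move=> a b [La [wa [Lwa ea]]] [Lb [wb [Lwb eb]]]; split; first exact: LB.
by exists (wa - wb); split; [exact: LB | rewrite !mulmxBr ea eb].
Qed.

Lemma L1Lambda_subgroup : is_subgroup M.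
Proof.
have [L0 LB] := Lambda_subgroup.
split; first by exists 0 => //; rewrite mulmx0.
move=> _ _ [wa La <-] [wb Lb <-]; exists (wa - wb); first exact: LB.
by rewrite mulmxBr.
Qed.

(* phi_1 + phi_2 is well defined and injective on Z^d / Gamma1. *)
Lemma Gamma1E x : Gamma1 x <-> M ((L1 + L2) *m x).
Proof.
rewrite mulmxDl; split=> [[Lx [w [Lw e]]]|[l [[y ey] [z ez]] e]].
  by apply: (subgroupD L1Lambda_subgroup); [exists x | exists w].
have e1 : L1 *m (l - x) = L2 *m x by rewrite mulmxBr e addrAC subrr add0r.
split; first split.
- by exists (y - x); rewrite mulmxBr -ey e addrK.
- by exists (l - x).
exists (l - x); split => //; split; first by exists x.
exists (z - l + x); rewrite !(mulmxBr, mulmxDr, mulmxN) -ez e.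
entrywise_ring.
Qed.

Lemma Lambda_det_scale v : Lambda ((\det L1 * \det L2) *: v).
Proof.
split.
  exists (\det L1 *: (\adj L2 *m (L1 *m v))).
  by rewrite !scalemxAr (mulmxA L2) mul_mx_adj mul_scalar_mx !scalemxAr !scalerA mulrC.
exists (\det L2 *: (\adj L1 *m (L2 *m v))).
by rewrite !scalemxAr (mulmxA L1) mul_mx_adj mul_scalar_mx !scalemxAr !scalerA.
Qed.

Lemma Gamma1_det_scale v : Gamma1 (v *+ `|(\det L1 * \det L2) ^+ 2|%N).
Proof.
set c := \det L1 * \det L2.
rewrite -scaler_nat natz gez0_abs ?sqr_ge0 // expr2 -scalerA.
split; first exact: Lambda_det_scale.
exists (c *: (\det L2 *: (\adj L1 *m (L2 *m v)))); split; first exact: Lambda_det_scale.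
rewrite !scalemxAr (mulmxA L1) mul_mx_adj mul_scalar_mx !scalemxAr !scalerA.
by congr (_ *m (_ *: _)); rewrite /c; ring.
Qed.

End Lattices.

Lemma irreducible_pair_sym d (L1 L2 : 'M[int]_d) :
  irreducible_pair L1 L2 -> irreducible_pair L2 L1.
Proof. by move=> irr [U [V [? ? ? ? ?]]]; apply: irr; exists U, V. Qed.

Lemma irreducible_pair_det_neq0 d (L1 L2 : 'M[int]_d) :
  irreducible_pair L1 L2 -> (1 < d)%N -> \det L1 != 0.
Proof.
move=> irr d_gt1; apply/negP => /eqP detL1; apply: irr.
set A := (ratmx L1)^T.
have rankA : (\rank A < d)%N.
  rewrite ltn_neqAle rank_leq_row andbT; apply/eqP => rankA.
  have : A \in unitmx by rewrite -row_free_unit /row_free rankA.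
  by rewrite unitmxE det_tr /ratmx det_map_mx detL1 rmorph0 unitr0.
have /matrix0Pn[i [j Kij]] : kermx A != 0.
  by rewrite -mxrank_eq0 mxrank_ker -lt0n subn_gt0.
set U := delta_mx i i *m kermx A.
have rankU : \rank U = 1%N.
  apply/eqP; rewrite eqn_leq (leq_trans (mxrankM_maxl _ _)) ?mxrank_delta //=.
  rewrite lt0n mxrank_eq0; apply: contraNneq Kij => U0.
  have rowU : row i (kermx A) = row i U by rewrite !rowE /U mulmxA mul_delta_mx.
  by apply/eqP; move/rowP/(_ j): rowU; rewrite U0 !mxE.
set W := U *m (ratmx L2)^T.
exists U, (if W == 0 then U else W); split; rewrite ?rankU //.
- case: eqP => [//|/eqP W0]; apply/eqP; rewrite eqn_leq lt0n mxrank_eq0 W0 /=.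
  by rewrite -rankU mxrankM_maxl.
- by rewrite /U -mulmxA mulmx_ker mulmx0 sub0mx.
- by rewrite -/W; case: eqP => [->|_]; rewrite ?sub0mx ?submx_refl.
Qed.

Lemma det_eq0_small d (L : 'M[int]_d) : (d <= 1)%N -> \det L = 0 -> L = 0.
Proof.
case: d L => [|[|//]] L _ detL; apply/matrixP => i j; first by case: i.
by rewrite !ord1 mxE -det_mx11.
Qed.

Lemma irreducible_pair_nondegenerate d (L1 L2 : 'M[int]_d) :
  irreducible_pair L1 L2 -> \det L1 != 0 /\ \det L2 != 0 \/ L1 = 0 \/ L2 = 0.
Proof.
move=> irr; have [d_le1|d_gt1] := leqP d 1; last first.
  left; split; first exact: irreducible_pair_det_neq0 irr d_gt1.
  exact: irreducible_pair_det_neq0 (irreducible_pair_sym irr) d_gt1.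
have [/(det_eq0_small d_le1) ->|detL1] := eqVneq (\det L1) 0; first by right; left.
have [/(det_eq0_small d_le1) ->|detL2] := eqVneq (\det L2) 0; first by right; right.
by left.
Qed.

Section Sumset.
Variables (d : nat) (L1 L2 : 'M[int]_d).

Local Notation G := (Gamma1 L1 L2).
Local Notation M := (L1Lambda L1 L2).
Local Notation P := (L1 + L2).

Lemma card_cosets_mulmx (S : set (Zvec d)) :
  cosets M [set P *m x | x in S] #= cosets G S.
Proof.
have subG := Gamma1_subgroup L1 L2; have subM := L1Lambda_subgroup L1 L2.
pose F (C : set (Zvec d)) := [set w | exists2 x, C x & M (w - P *m x)].
have FE x : F (coset G x) = coset M (P *m x).
  apply/seteqP; split=> w.
    move=> [_ [h Gh <-] Mw]; exists (w - P *m x); last by rewrite addrC subrK.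
    have -> : w - P *m x = w - P *m (x + h) + P *m h by rewrite mulmxDr; entrywise_ring.
    by apply: (subgroupD subM) => //; apply/Gamma1E.
  move=> [m Mm <-]; exists x; first by exists 0; [apply: (subgroup0 subG) | rewrite addr0].
  by rewrite addrC addKr.
have Fimage : F @` cosets G S = cosets M [set P *m x | x in S].
  apply/seteqP; split=> _ [_ [x Sx <-] <-].
    by rewrite FE; exists (P *m x) => //; exists x.
  by exists (coset G x); [exists x | rewrite FE].
rewrite -Fimage; apply: inj_card_eq => _ _ /set_mem[x1 _ <-] /set_mem[x2 _ <-].
rewrite !FE => /(coset_eqP subM) M12; apply/(coset_eqP subG)/Gamma1E.
by rewrite mulmxBr.
Qed.

Hypotheses (detL1 : \det L1 != 0) (detL2 : \det L2 != 0).

Let N := `|(\det L1 * \det L2) ^+ 2|%N.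

Lemma det_scale_gt0 : (0 < N)%N.
Proof. by rewrite absz_gt0 expf_neq0 // mulf_neq0. Qed.

Variable X : set (Zvec d).

Lemma sumset_mod : card_le (phi_sumset L1 L2 X) (cosets G X) ->
  forall x y, X x -> X y -> exists2 z, X z & M (L1 *m x + L2 *m y - P *m z).
Proof.
move=> le_sumset x y Xx Xy; have subM := L1Lambda_subgroup L1 L2.
have sub_sumset : cosets M [set P *m x | x in X] `<=` phi_sumset L1 L2 X.
  move=> _ [_ [z Xz <-] <-]; exists (P *m z) => //.
  by exists z => //; exists z; rewrite ?mulmxDl.
have fin : finite_set (cosets M [set P *m x | x in X]).
  rewrite (eq_finite_set (card_cosets_mulmx X)).
  exact: cosets_finite (Gamma1_subgroup L1 L2) det_scale_gt0 (Gamma1_det_scale L1 L2) X.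
have sumsetE : phi_sumset L1 L2 X `<=` cosets M [set P *m x | x in X].
  by apply: card_le_finite_sub fin sub_sumset _; rewrite (card_le_eqr (card_cosets_mulmx X)).
have /sumsetE : phi_sumset L1 L2 X (coset M (L1 *m x + L2 *m y)).
  by exists (L1 *m x + L2 *m y) => //; exists x => //; exists y.
move=> [_ [z Xz <-] /(coset_eqP subM) Mz]; exists z => //.
by rewrite -opprB; apply: (subgroupN subM).
Qed.

Hypotheses (satX : saturated G X) (X0 : X 0) (genX : generates_quot G X).
Hypothesis sumsetX :
  forall x y, X x -> X y -> exists2 z, X z & M (L1 *m x + L2 *m y - P *m z).

(* [A] represents psi^-1 phi_1 on G, psi being multiplication by [P]. *)
Lemma exists_phi1_lift : exists A : 'M[int]_d, forall g, M ((L1 - P * A) *m g).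
Proof.
have subM := L1Lambda_subgroup L1 L2.
have liftP g : exists z, M (L1 *m g - P *m z).
  suff /seteqP[_ /(_ g I)] : [set g | exists z, M (L1 *m g - P *m z)] = setT by [].
  apply: genX.
  - by exists 0; rewrite !mulmx0 subr0; apply: (subgroup0 subM).
  - move=> a b [za Ma] [zb Mb]; exists (za - zb).
    have -> : L1 *m (a - b) - P *m (za - zb) = L1 *m a - P *m za - (L1 *m b - P *m zb).
      by rewrite !mulmxBr; entrywise_ring.
    exact: (subgroupB subM).
  - by move=> h [Lh _]; exists 0; rewrite mulmx0 subr0; exists h.
  - by move=> x Xx; have [z _ Mz] := sumsetX Xx X0; exists z; rewrite mulmx0 addr0 in Mz.
have [z Mz] := choice (fun j : 'I_d => liftP (delta_mx j 0)).
exists (\matrix_(i, j) z j i 0) => g.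
suff /seteqP[_ /(_ g I)] : [set g | M ((L1 - P * \matrix_(i, j) z j i 0) *m g)] = setT.
  by [].
apply: subgroup_delta_setT; first exact: subgroup_preimage.
move=> j /=; rewrite mulmxBl mulmxM.
suff -> : \matrix_(i, j) z j i 0 *m delta_mx j 0 = z j by [].
by rewrite -colE; apply/matrixP => i k; rewrite !mxE ord1.
Qed.

Section Lift.
Variable A : 'M[int]_d.
Hypothesis liftA : forall g, M ((L1 - P * A) *m g).

Lemma lift_mulmxE (v : Zvec d) : P *m (A *m v) = L1 *m v - (L1 - P * A) *m v.
Proof. by rewrite mulmxBl mulmxM opprB [L1 *m v + _]addrC subrK. Qed.

Lemma Lambda_lift_Gamma1 l : Lambda L1 L2 l -> G (A *m l).
Proof.
move=> Ll; apply/Gamma1E; rewrite lift_mulmxE.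
by apply: (subgroupB (L1Lambda_subgroup L1 L2)) => //; exists l.
Qed.

Lemma lift_mx_convex : mx_convex A X.
Proof.
move=> x y Xx Xy; have [z Xz Mz] := sumsetX Xx Xy.
apply: (saturated_mod satX Xz); apply/Gamma1E.
have -> : P *m (A *m x + (1 - A) *m y - z) =
    L1 *m x + L2 *m y - P *m z - (L1 - P * A) *m x + (L1 - P * A) *m y.
  by rewrite !mulmxBl !mulmxM mul1mx !(mulmxDr, mulmxBr, mulmxN, mulmxDl); entrywise_ring.
have subM := L1Lambda_subgroup L1 L2.
by apply: (subgroupD subM) => //; apply: (subgroupB subM).
Qed.

Lemma Lambda_lift_image l : Lambda L1 L2 l ->
  exists g, G (A *m g - l) /\ G (A *m (A *m g)).
Proof.
move=> Ll; have [_ [z ez]] := Ll; have subG := Gamma1_subgroup L1 L2.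
have GAgl : G (A *m (l + z) - l).
  apply/Gamma1E; rewrite mulmxBr lift_mulmxE mulmxDr -ez -mulmxDl.
  by rewrite addrAC subrr add0r -mulmxN; apply: liftA.
exists (l + z); split => //.
rewrite -(subrK l (A *m (l + z))) mulmxDr.
apply: (subgroupD subG); last exact: Lambda_lift_Gamma1.
by apply: Lambda_lift_Gamma1; case: GAgl.
Qed.

End Lift.

Lemma Lambda_sub : Lambda L1 L2 `<=` X.
Proof.
have [A liftA] := exists_phi1_lift; have subG := Gamma1_subgroup L1 L2.
have AG h : G h -> G (A *m h) by move=> [Lh _]; apply: Lambda_lift_Gamma1.
move=> l /(Lambda_lift_image liftA)[g [Ggl GA2g]].
have XAg := mx_convex_generating_mem subG det_scale_gt0 (Gamma1_det_scale L1 L2)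
  AG satX X0 (lift_mx_convex liftA) genX GA2g.
by apply: (saturated_mod satX XAg); rewrite -opprB; apply: (subgroupN subG).
Qed.

End Sumset.

Lemma Lambda_sub_Gamma1_degenerate d (L1 L2 : 'M[int]_d) :
  L1 = 0 \/ L2 = 0 -> Lambda L1 L2 `<=` Gamma1 L1 L2.
Proof.
move=> L0 x Lx; split=> //; exists 0; split; first exact: subgroup0 (Lambda_subgroup L1 L2).
case: L0 => [L10|->]; last by rewrite mul0mx mulmx0.
by have [_ [z ->]] := Lx; rewrite L10 !mul0mx.
Qed.

Unset Implicit Arguments.

Theorem lemma4p4 (d : nat) (L1 L2 : 'M[int]_d)
  (hirr : irreducible_pair L1 L2) (hcop : coprime_pair L1 L2)
  (X : set (Zvec d))
  (hXsat : saturated (Gamma1 L1 L2) X) (hX0 : X 0) :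
  ~ generates_quot (Gamma1 L1 L2) X
  \/ ~ (card_le (phi_sumset L1 L2 X) (cosets (Gamma1 L1 L2) X))
  \/ Lambda L1 L2 `<=` X.
Proof.
have [genX|] := pselect (generates_quot (Gamma1 L1 L2) X); last by left.
have [le_sumset|] := pselect (card_le (phi_sumset L1 L2 X) (cosets (Gamma1 L1 L2) X));
  last by right; left.
right; right.
have [[detL1 detL2]|L0] := irreducible_pair_nondegenerate hirr.
  by apply: (Lambda_sub detL1 detL2 hXsat hX0 genX) => x y; apply: sumset_mod.
move=> x /(Lambda_sub_Gamma1_degenerate L0) Gx.
by have := hXsat 0 x hX0 Gx; rewrite add0r.
Qed.
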